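(* Let $m\in\mathbb{Z}$ and let $h_1,h_2:\mathbb{Z}\to\mathbb{C}$ be functions decreasing sufficiently rapidly at infinity (so that all series below converge absolutely). Then $$\sum_{n\in\mathbb{Z}}\sum_{k=0}^{\infty}(-1)^n\,h_1\!\left(\frac{m+n+|n+m|}{2}+k\right)h_2\!\left(\frac{n-m-|n+m|}{2}-k\right)=\left(\sum_{k=0}^{\infty}(-1)^k h_1(k)\right)\left(\sum_{n=0}^{\infty}(-1)^{m+n}h_2(-m-n)\right).$$ *)

From Stdlib Require Import Reals ZArith.
From Coquelicot Require Export Coquelicot.
Open Scope R_scope.

Definition sgnZ (n : Z) : C := if Z.even n then RtoC 1 else RtoC (-1).

Definition rapid_decay (h : Z -> C) : Prop :=
  forall N : nat, exists c : R, forall x : Z,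
    Cmod (h x) * (1 + IZR (Z.abs x)) ^ N <= c.

Definition is_Zseries (f : Z -> C) (l : C) : Prop :=
  exists l1 l2 : C,
    is_series (fun n : nat => f (Z.of_nat n)) l1 /\
    is_series (fun n : nat => f (- (Z.of_nat n + 1))%Z) l2 /\
    l = Cplus l1 l2.

From Stdlib Require Import Reals ZArith Lia Lra IndefiniteDescription.
From Coquelicot Require Import Coquelicot.

(* With a_i = (-1)^i h1(i) and b_j = (-1)^(m+j) h2(-m-j), the substitution
   e = n + m turns the n-th inner series into the sum of a_i b_j along the
   diagonal i - j = e of N x N, the sign (-1)^n agreeing with (-1)^i (-1)^j.
   Summing over n therefore sums the double series of a_i b_j, whose value is
   A B.  Rapid decay gives |a_i|, |b_j| <= c / ((i+1)(i+2)), which dominates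
   each half of that double series by a product of summable sequences and so
   justifies interchanging the order of summation. *)

(* [psum a n] sums the first n terms, whereas [sum_n a n] sums n + 1 of them. *)
Fixpoint psum {G : AbelianMonoid} (a : nat -> G) (n : nat) : G :=
  match n with O => zero | S n => plus (psum a n) (a n) end.

Lemma psum_S_sum_n {G : AbelianMonoid} (a : nat -> G) n : psum a (S n) = sum_n a n.
Proof.
  induction n as [|n IH]; simpl in *.
  - now rewrite sum_O, plus_zero_l.
  - now rewrite sum_Sn, <- IH.
Qed.

Lemma plus_minus_plus_cancel {G : AbelianGroup} (l p x : G) :
  plus (minus l (plus p x)) x = minus l p.
Proof.
  unfold minus; rewrite opp_plus, <- !plus_assoc, plus_opp_l, plus_zero_r. reflexivity.
Qed.

Lemma is_series_psum {K : AbsRing} {V : NormedModule K} (a : nat -> V) l :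
  is_series a l <-> filterlim (psum a) eventually (locally l).
Proof.
  unfold is_series.
  rewrite (filterlim_locally_ball_norm (K := K) (sum_n a)),
    (filterlim_locally_ball_norm (K := K) (psum a)).
  split; intros H eps; destruct (H eps) as [N HN].
  - exists (S N); intros [|n] Hn; [lia|]. rewrite psum_S_sum_n. apply HN. lia.
  - exists N; intros n Hn. rewrite <- psum_S_sum_n. apply HN. lia.
Qed.

Lemma is_series_psum_error {K : AbsRing} {V : NormedModule K} (a : nat -> V) l :
  is_series a l <-> is_lim_seq (fun n => norm (minus (psum a n) l)) 0.
Proof.
  rewrite is_series_psum, (filterlim_locally_ball_norm (K := K) (psum a)), <- is_lim_seq_spec.
  unfold ball_norm; simpl.
  split; intros H eps; destruct (H eps) as [N HN]; exists N; intros n Hn;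
    specialize (HN n Hn); rewrite Rminus_0_r, Rabs_pos_eq in * by apply norm_ge_0; exact HN.
Qed.

Lemma is_series_tail {K : AbsRing} {V : NormedModule K} (a : nat -> V) l k :
  is_series a l -> is_series (fun n => a (n + k)%nat) (minus l (psum a k)).
Proof.
  intros Ha; induction k as [|k IH].
  - replace (minus l (psum a 0)) with l by (symmetry; exact (minus_zero_r l)).
    eapply is_series_ext; [|exact Ha]. intros n; now rewrite Nat.add_0_r.
  - apply (is_series_ext (fun n => a (S n + k)%nat)); [intros n; f_equal; lia|].
    simpl psum.
    apply (is_series_incr_1 (fun n => a (n + k)%nat)).
    replace (plus _ _) with (minus l (psum a k))
      by (symmetry; exact (plus_minus_plus_cancel l _ _)).
    exact IH.
Qed.

Lemma norm_series_le {K : AbsRing} {V : NormedModule K} (a : nat -> V) (b : nat -> R) la lb :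
  is_series a la -> is_series b lb -> (forall n, norm (a n) <= b n) -> norm la <= lb.
Proof.
  intros Ha Hb Hab.
  assert (Hpsum : forall n, norm (psum a n) <= psum b n).
  { induction n as [|n IH]; simpl.
    - rewrite norm_zero. apply Rle_refl.
    - eapply Rle_trans; [apply norm_triangle|].
      change (plus (psum b n) (b n)) with (psum b n + b n).
      specialize (Hab n). lra. }
  apply is_series_psum in Ha; apply is_series_psum in Hb.
  apply (is_lim_seq_le _ _ (norm la) lb Hpsum); [|exact Hb].
  eapply filterlim_comp; [exact Ha | exact (filterlim_norm la)].
Qed.

Lemma is_series_zero {K : AbsRing} {V : NormedModule K} :
  is_series (fun _ : nat => @zero V) zero.
Proof.
  apply is_series_psum.
  apply (filterlim_ext (fun _ => zero)); [|apply filterlim_const].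
  intros n; induction n as [|n IH]; simpl; [reflexivity|].
  rewrite <- IH. symmetry. exact (plus_zero_r _).
Qed.

Definition inv_pronic (n : nat) : R := / ((INR n + 1) * (INR n + 2)).

Lemma inv_pronic_pos n : 0 < inv_pronic n.
Proof. unfold inv_pronic. pose proof (pos_INR n). apply Rinv_0_lt_compat. nra. Qed.

Lemma inv_pronic_le m n : (m <= n)%nat -> inv_pronic n <= inv_pronic m.
Proof.
  intros Hmn. apply le_INR in Hmn. pose proof (pos_INR m).
  unfold inv_pronic. apply Rinv_le_contravar; nra.
Qed.

Lemma is_series_inv_pronic : is_series inv_pronic 1.
Proof.
  assert (Hpsum : forall n, @eq R (psum inv_pronic n) (1 - / (INR n + 1))).
  { induction n as [|n IH].
    - change (psum inv_pronic 0) with 0. simpl. field.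
    - change (psum inv_pronic n + inv_pronic n = 1 - / (INR (S n) + 1)).
      rewrite IH, S_INR. unfold inv_pronic. pose proof (pos_INR n). field. lra. }
  apply is_series_psum_error.
  apply (is_lim_seq_ext (fun n => / INR (S n))).
  - intros n. change (norm (minus (psum inv_pronic n) 1)) with (Rabs (psum inv_pronic n - 1)).
    rewrite Hpsum, S_INR. pose proof (pos_INR n).
    replace (1 - / (INR n + 1) - 1) with (- / (INR n + 1)) by ring.
    rewrite Rabs_Ropp, Rabs_pos_eq; [reflexivity|]. apply Rlt_le, Rinv_0_lt_compat. lra.
  - apply (is_lim_seq_incr_1 (fun n => / INR n)).
    replace (Finite 0) with (Rbar_inv p_infty) by reflexivity.
    apply is_lim_seq_inv; [exact is_lim_seq_INR | discriminate].
Qed.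

Lemma rapid_decay_opp (h : Z -> C) : rapid_decay h -> rapid_decay (fun x => h (- x)%Z).
Proof.
  intros Hh N. destruct (Hh N) as [c Hc]. exists c. intros x.
  rewrite <- Z.abs_opp. apply Hc.
Qed.

Lemma rapid_decay_inv_pronic_bound (h : Z -> C) (s : Z) :
  rapid_decay h -> exists c, forall n, Cmod (h (s + Z.of_nat n)%Z) <= c * inv_pronic n.
Proof.
  intros Hh. destruct (Hh 2%nat) as [c Hc].
  set (M := 1 + IZR (Z.abs s)).
  exists (2 * M ^ 2 * c). intros n.
  set (y := (s + Z.of_nat n)%Z). specialize (Hc y).
  assert (Hn : INR n + 1 <= M * (1 + IZR (Z.abs y))).
  { assert (IZR (Z.of_nat n) <= IZR (Z.abs s) + IZR (Z.abs y)).
    { rewrite <- plus_IZR. apply IZR_le. unfold y. lia. }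
    pose proof (IZR_le 0 _ (Z.abs_nonneg s)). pose proof (IZR_le 0 _ (Z.abs_nonneg y)).
    rewrite INR_IZR_INZ. unfold M. nra. }
  pose proof (pos_INR n). pose proof (Cmod_ge_0 (h y)).
  assert (Hpronic : (INR n + 1) * (INR n + 2) <= 2 * M ^ 2 * (1 + IZR (Z.abs y)) ^ 2) by nra.
  unfold inv_pronic.
  apply (Rmult_le_reg_r ((INR n + 1) * (INR n + 2))); [nra|].
  rewrite Rmult_assoc, Rinv_l, Rmult_1_r by nra.
  nra.
Qed.

Lemma sgnZ_add p q : sgnZ (p + q) = (sgnZ p * sgnZ q)%C.
Proof.
  unfold sgnZ. rewrite Z.even_add.
  destruct (Z.even p), (Z.even q); simpl; apply injective_projections; simpl; ring.
Qed.

Lemma sgnZ_double j : sgnZ (2 * j) = 1.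
Proof. unfold sgnZ. now rewrite Z.even_mul. Qed.

Lemma Cmod_sgnZ_mul z x : Cmod (sgnZ z * x)%C = Cmod x.
Proof.
  rewrite Cmod_mult. unfold sgnZ.
  destruct (Z.even z); rewrite Cmod_R, ?Rabs_R1, ?Rabs_m1; ring.
Qed.

Lemma sgnZ_mult_parity x y z j : (y + z = x + 2 * j)%Z -> sgnZ x = (sgnZ y * sgnZ z)%C.
Proof. intros E. now rewrite <- sgnZ_add, E, sgnZ_add, sgnZ_double, Cmult_1_r. Qed.

Lemma is_series_Cmult_l (a : nat -> C) (c l : C) :
  is_series a l -> is_series (fun n => c * a n)%C (c * l)%C.
Proof. exact (is_series_scal_l c a l). Qed.

Lemma is_series_Cmult_r (a : nat -> C) (c l : C) :
  is_series a l -> is_series (fun n => a n * c)%C (l * c)%C.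
Proof.
  intros Ha. rewrite Cmult_comm.
  apply (is_series_ext (fun n => c * a n)%C); [intros n; apply Cmult_comm|].
  exact (is_series_Cmult_l a c l Ha).
Qed.

Lemma is_series_swap (F : nat -> nat -> C) (alpha beta : nat -> R) (Salpha Sbeta : R)
    (col : nat -> C) :
  (forall k, 0 <= beta k) -> is_series alpha Salpha -> is_series beta Sbeta ->
  (forall n k, Cmod (F n k) <= alpha n * beta k) ->
  (forall k, is_series (fun n => F n k) (col k)) ->
  exists (row : nat -> C) (L : C),
    (forall n, is_series (F n) (row n)) /\ is_series row L /\ is_series col L.
Proof.
  intros Hbeta Halpha Hbeta_sum HF Hcol.
  assert (Hrow : forall n, exists r, is_series (F n) r).
  { intros n. apply (ex_series_le (V := C_CompleteNormedModule) _ (fun k => alpha n * beta k)).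
    - intros k. apply HF.
    - exists (alpha n * Sbeta). exact (is_series_scal_l (alpha n) _ _ Hbeta_sum). }
  destruct (functional_choice _ Hrow) as [row Hrow_sum].
  assert (Hcol_bound : forall k, Cmod (col k) <= Salpha * beta k).
  { intros k. apply (norm_series_le (fun n => F n k) (fun n => alpha n * beta k));
      [apply Hcol | apply is_series_scal_r, Halpha | intros n; apply HF]. }
  destruct (ex_series_le (V := C_CompleteNormedModule) col (fun k => Salpha * beta k))
    as [L HL].
  { exact Hcol_bound. }
  { exists (Salpha * Sbeta). exact (is_series_scal_l _ _ _ Hbeta_sum). }
  exists row, L. split; [exact Hrow_sum | split; [|exact HL]].
  assert (Hfinite : forall M, is_series (fun k => psum (fun n => F n k) M) (psum row M)).
  { induction M as [|M IH]; [exact is_series_zero|].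
    exact (is_series_plus _ _ _ _ IH (Hrow_sum M)). }
  assert (Htail : forall M k,
    Cmod (col k - psum (fun n => F n k) M)%C <= Rabs (psum alpha M - Salpha) * beta k).
  { intros M k. eapply Rle_trans.
    - apply (norm_series_le (fun n => F (n + M)%nat k) (fun n => alpha (n + M)%nat * beta k)).
      + exact (is_series_tail _ _ M (Hcol k)).
      + apply is_series_scal_r. exact (is_series_tail _ _ M Halpha).
      + intros n. apply HF.
    - apply Rmult_le_compat_r; [apply Hbeta|].
      rewrite Rabs_minus_sym. apply Rle_abs. }
  (* The first M row sums differ from L by the sum of the column tails. *)
  assert (Herror : forall M, Cmod (psum row M - L)%C <= Rabs (psum alpha M - Salpha) * Sbeta).
  { intros M. replace (psum row M - L)%C with (- (L - psum row M))%C by ring.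
    rewrite Cmod_opp.
    apply (norm_series_le (fun k => col k - psum (fun n => F n k) M)%C
             (fun k => Rabs (psum alpha M - Salpha) * beta k)).
    - exact (is_series_minus _ _ _ _ HL (Hfinite M)).
    - exact (is_series_scal_l _ _ _ Hbeta_sum).
    - apply Htail. }
  apply is_series_psum_error.
  apply (is_lim_seq_le_le (fun _ => 0) _ (fun M => Rabs (psum alpha M - Salpha) * Sbeta)).
  - intros M. split; [apply norm_ge_0 | apply Herror].
  - apply is_lim_seq_const.
  - replace (Finite 0) with (Rbar_mult 0 Sbeta) by (simpl; now rewrite Rmult_0_l).
    apply is_lim_seq_scal_r. exact (proj1 (is_series_psum_error alpha Salpha) Halpha).
Qed.

(* The k-th term collects the products a_i b_k with i >= k and a_k b_j with j > k. *)
Lemma is_series_mult_tails (a b : nat -> C) (A B : C) :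
  is_series a A -> is_series b B ->
  is_series (fun k => (A - psum a k) * b k + a k * (B - psum b (S k)))%C (A * B)%C.
Proof.
  intros Ha Hb.
  set (f := fun k => ((A - psum a k) * b k + a k * (B - psum b (S k)))%C).
  assert (Hpsum : forall M, psum f M = (A * B - (A - psum a M) * (B - psum b M))%C).
  { induction M as [|M IH].
    - change (@eq C 0 (A * B - (A - 0) * (B - 0))%C). ring.
    - change (psum f M + f M = A * B - (A - (psum a M + a M)) * (B - (psum b M + b M)))%C.
      rewrite IH. unfold f. change (psum b (S M)) with (psum b M + b M)%C. ring. }
  apply is_series_psum_error in Ha, Hb. apply is_series_psum_error.
  apply (is_lim_seq_ext (fun M => Cmod (psum a M - A)%C * Cmod (psum b M - B)%C)).
  - intros M. change (norm (minus (psum f M) (A * B)%C)) with (Cmod (psum f M - A * B)%C).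
    rewrite Hpsum.
    replace (A * B - (A - psum a M) * (B - psum b M) - A * B)%C
      with (- ((psum a M - A) * (psum b M - B)))%C by ring.
    now rewrite Cmod_opp, Cmod_mult.
  - replace (Finite 0) with (Finite (0 * 0)) by (f_equal; ring).
    exact (is_lim_seq_mult' _ _ 0 0 Ha Hb).
Qed.

Lemma is_Zseries_ext (g g' : Z -> C) l :
  (forall z, g z = g' z) -> is_Zseries g l -> is_Zseries g' l.
Proof.
  intros E [l1 [l2 [H1 [H2 Hl]]]]. exists l1, l2.
  split; [|split; [|exact Hl]]; (eapply is_series_ext; [|eassumption]); intros n; apply E.
Qed.

Lemma is_Zseries_succ (g : Z -> C) l : is_Zseries g l -> is_Zseries (fun z => g (z + 1)%Z) l.
Proof.
  intros [l1 [l2 [H1 [H2 Hl]]]]. exists (l1 - g 0%Z)%C, (l2 + g 0%Z)%C.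
  split; [|split].
  - apply (is_series_ext (fun n => g (Z.of_nat (S n)))); [intros n; cbv beta; f_equal; lia|].
    apply (is_series_incr_1 (fun n => g (Z.of_nat n))).
    replace (plus _ _) with l1; [exact H1|].
    change (l1 = l1 - g 0%Z + g 0%Z)%C. ring.
  - apply (is_series_ext (fun n => g (- Z.of_nat n)%Z)); [intros n; cbv beta; f_equal; lia|].
    apply (is_series_decr_1 (fun n => g (- Z.of_nat n)%Z)).
    replace (plus _ _) with l2 by (change (l2 = l2 + g 0%Z - g 0%Z)%C; ring).
    eapply is_series_ext; [|exact H2]. intros n. cbv beta. f_equal. lia.
  - rewrite Hl. ring.
Qed.

Lemma is_Zseries_pred (g : Z -> C) l : is_Zseries g l -> is_Zseries (fun z => g (z - 1)%Z) l.
Proof.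
  intros [l1 [l2 [H1 [H2 Hl]]]]. exists (l1 + g (-1)%Z)%C, (l2 - g (-1)%Z)%C.
  split; [|split].
  - apply (is_series_decr_1 (fun n => g (Z.of_nat n - 1)%Z)).
    replace (plus _ _) with l1 by (change (l1 = l1 + g (-1)%Z - g (-1)%Z)%C; ring).
    eapply is_series_ext; [|exact H1]. intros n. cbv beta. f_equal. lia.
  - apply (is_series_ext (fun n => g (- (Z.of_nat (S n) + 1))%Z));
      [intros n; cbv beta; f_equal; lia|].
    apply (is_series_incr_1 (fun n => g (- (Z.of_nat n + 1))%Z)).
    replace (plus _ _) with l2; [exact H2|].
    change (l2 = l2 - g (-1)%Z + g (-1)%Z)%C. ring.
  - rewrite Hl. ring.
Qed.

Lemma is_Zseries_shift (g : Z -> C) l s :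
  is_Zseries g l -> is_Zseries (fun z => g (z + s)%Z) l.
Proof.
  assert (Hnat : forall p g, is_Zseries g l ->
    is_Zseries (fun z => g (z + Z.of_nat p)%Z) l /\ is_Zseries (fun z => g (z - Z.of_nat p)%Z) l).
  { induction p as [|p IH]; intros g' Hg; split.
    - eapply is_Zseries_ext; [|exact Hg]. intros z. cbv beta. f_equal. lia.
    - eapply is_Zseries_ext; [|exact Hg]. intros z. cbv beta. f_equal. lia.
    - eapply is_Zseries_ext; [|exact (proj1 (IH _ (is_Zseries_succ _ _ Hg)))].
      intros z. cbv beta. f_equal. lia.
    - eapply is_Zseries_ext; [|exact (proj2 (IH _ (is_Zseries_pred _ _ Hg)))].
      intros z. cbv beta. f_equal. lia. }
  intros Hg. destruct (Z_le_gt_dec 0 s).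
  - eapply is_Zseries_ext; [|exact (proj1 (Hnat (Z.to_nat s) g Hg))].
    intros z. cbv beta. f_equal. lia.
  - eapply is_Zseries_ext; [|exact (proj2 (Hnat (Z.to_nat (- s)) g Hg))].
    intros z. cbv beta. f_equal. lia.
Qed.

Lemma inv_pronic_bound_nonneg (a : nat -> C) c :
  (forall n, Cmod (a n) <= c * inv_pronic n) -> 0 <= c.
Proof.
  intros Ha. specialize (Ha 0%nat). pose proof (Cmod_ge_0 (a 0%nat)).
  pose proof (inv_pronic_pos 0). nra.
Qed.

Lemma ex_series_inv_pronic_bound (a : nat -> C) c :
  (forall n, Cmod (a n) <= c * inv_pronic n) -> exists A, is_series a A.
Proof.
  intros Ha. apply (ex_series_le (V := C_CompleteNormedModule) a (fun n => c * inv_pronic n)).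
  - exact Ha.
  - exists (c * 1). exact (is_series_scal_l c _ _ is_series_inv_pronic).
Qed.

Lemma Cmod_mult_inv_pronic_le x y cx cy i j d :
  0 <= cx -> Cmod x <= cx * inv_pronic i -> Cmod y <= cy * inv_pronic j -> (d <= i)%nat ->
  Cmod (x * y)%C <= cx * cy * inv_pronic d * inv_pronic j.
Proof.
  intros Hcx Hx Hy Hdi. rewrite Cmod_mult.
  pose proof (inv_pronic_le d i Hdi). pose proof (inv_pronic_pos i).
  pose proof (Cmod_ge_0 x). pose proof (Cmod_ge_0 y).
  assert (Hx' : Cmod x <= cx * inv_pronic d) by nra.
  replace (cx * cy * inv_pronic d * inv_pronic j)
    with ((cx * inv_pronic d) * (cy * inv_pronic j)) by ring.
  apply Rmult_le_compat; assumption.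
Qed.

Definition diag_term (a b : nat -> C) (e : Z) (k : nat) : C :=
  if (0 <=? e)%Z then (a (Z.to_nat e + k)%nat * b k)%C
  else (a k * b (Z.to_nat (- e) + k)%nat)%C.

Lemma diagonal_sums (a b : nat -> C) (ca cb : R) (A B : C) :
  (forall n, Cmod (a n) <= ca * inv_pronic n) -> (forall n, Cmod (b n) <= cb * inv_pronic n) ->
  is_series a A -> is_series b B ->
  exists (upper lower : nat -> C) (L1 L2 : C),
    (forall d, is_series (fun k => a (d + k)%nat * b k)%C (upper d)) /\
    (forall d, is_series (fun k => a k * b (S d + k)%nat)%C (lower d)) /\
    is_series upper L1 /\ is_series lower L2 /\ (L1 + L2)%C = (A * B)%C.
Proof.
  intros Ha Hb HA HB.
  pose proof (inv_pronic_bound_nonneg a ca Ha) as Hca.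
  pose proof (inv_pronic_bound_nonneg b cb Hb) as Hcb.
  assert (Hw : forall k, 0 <= inv_pronic k) by (intros; apply Rlt_le, inv_pronic_pos).
  destruct (is_series_swap (fun d k => a (d + k)%nat * b k)%C (fun d => ca * cb * inv_pronic d)
              inv_pronic (ca * cb * 1) 1 (fun k => (A - psum a k) * b k)%C)
    as [upper [L1 [Hupper [HL1 Hcol1]]]].
  { exact Hw. }
  { exact (is_series_scal_l _ _ _ is_series_inv_pronic). }
  { exact is_series_inv_pronic. }
  { intros d k. apply (Cmod_mult_inv_pronic_le _ _ _ _ (d + k)); auto with arith. }
  { intros k. apply is_series_Cmult_r. exact (is_series_tail a A k HA). }
  destruct (is_series_swap (fun d k => a k * b (S d + k)%nat)%C (fun d => cb * ca * inv_pronic d)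
              inv_pronic (cb * ca * 1) 1 (fun k => a k * (B - psum b (S k)))%C)
    as [lower [L2 [Hlower [HL2 Hcol2]]]].
  { exact Hw. }
  { exact (is_series_scal_l _ _ _ is_series_inv_pronic). }
  { exact is_series_inv_pronic. }
  { intros d k. rewrite Cmult_comm.
    apply (Cmod_mult_inv_pronic_le _ _ _ _ (S d + k)); auto with arith. }
  { intros k. apply (is_series_ext (fun d => a k * b (d + S k)%nat)%C).
    - intros d. now rewrite Nat.add_succ_r.
    - apply is_series_Cmult_l. exact (is_series_tail b B (S k) HB). }
  exists upper, lower, L1, L2. do 4 (split; [assumption|]).
  apply (filterlim_locally_unique _ _ _ (is_series_plus _ _ _ _ Hcol1 Hcol2)).
  exact (is_series_mult_tails a b A B HA HB).
Qed.

Lemma is_Zseries_diag_sums (a b : nat -> C) (ca cb : R) (A B : C) :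
  (forall n, Cmod (a n) <= ca * inv_pronic n) -> (forall n, Cmod (b n) <= cb * inv_pronic n) ->
  is_series a A -> is_series b B ->
  exists D : Z -> C, (forall e, is_series (diag_term a b e) (D e)) /\ is_Zseries D (A * B)%C.
Proof.
  intros Ha Hb HA HB.
  destruct (diagonal_sums a b ca cb A B Ha Hb HA HB)
    as [upper [lower [L1 [L2 [Hupper [Hlower [HL1 [HL2 HAB]]]]]]]].
  exists (fun e => if (0 <=? e)%Z then upper (Z.to_nat e) else lower (Z.to_nat (- e) - 1)%nat).
  split.
  - intros e. unfold diag_term. destruct (Z.leb_spec 0 e).
    + apply Hupper.
    + eapply is_series_ext; [|apply Hlower]. intros k. cbv beta. do 3 f_equal. lia.
  - rewrite <- HAB. exists L1, L2. split; [|split; [|reflexivity]].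
    + eapply is_series_ext; [|exact HL1]. intros d. cbv beta.
      destruct (Z.leb_spec 0 (Z.of_nat d)); [|lia]. f_equal. lia.
    + eapply is_series_ext; [|exact HL2]. intros d. cbv beta.
      destruct (Z.leb_spec 0 (- (Z.of_nat d + 1))); [lia|]. f_equal. lia.
Qed.

Lemma summand_eq_diag_term (m n : Z) (h1 h2 : Z -> C) (k : nat) :
  Cmult (sgnZ n)
    (Cmult (h1 ((m + n + Z.abs (n + m)) / 2 + Z.of_nat k)%Z)
           (h2 ((n - m - Z.abs (n + m)) / 2 - Z.of_nat k)%Z))
  = diag_term (fun i => sgnZ (Z.of_nat i) * h1 (Z.of_nat i))%C
              (fun j => sgnZ (m + Z.of_nat j) * h2 (- m - Z.of_nat j)%Z)%C (n + m) k.
Proof.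
  unfold diag_term. destruct (Z.leb_spec 0 (n + m)).
  - replace (m + n + Z.abs (n + m))%Z with ((n + m) * 2)%Z by lia.
    replace (n - m - Z.abs (n + m))%Z with ((- m) * 2)%Z by lia.
    rewrite !Z.div_mul by lia.
    replace (Z.of_nat (Z.to_nat (n + m) + k)) with (n + m + Z.of_nat k)%Z by lia.
    rewrite (sgnZ_mult_parity n (n + m + Z.of_nat k) (m + Z.of_nat k) (m + Z.of_nat k)) by lia.
    replace (- m + - Z.of_nat k)%Z with (- m - Z.of_nat k)%Z by lia.
    ring.
  - replace (m + n + Z.abs (n + m))%Z with (0 * 2)%Z by lia.
    replace (n - m - Z.abs (n + m))%Z with (n * 2)%Z by lia.
    rewrite !Z.div_mul by lia.
    replace (- m - Z.of_nat (Z.to_nat (- (n + m)) + k))%Z with (n - Z.of_nat k)%Z by lia.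
    rewrite (sgnZ_mult_parity n (Z.of_nat k) (m + Z.of_nat (Z.to_nat (- (n + m)) + k))
               (Z.of_nat k - n)) by lia.
    rewrite Z.add_0_l. ring.
Qed.

Theorem lemma2 (m : Z) (h1 h2 : Z -> C)
  (H1 : rapid_decay h1) (H2 : rapid_decay h2) :
  exists (I : Z -> C) (A B : C),
    (forall n : Z, is_series (fun k : nat =>
        Cmult (sgnZ n)
          (Cmult (h1 ((m + n + Z.abs (n + m)) / 2 + Z.of_nat k)%Z)
                 (h2 ((n - m - Z.abs (n + m)) / 2 - Z.of_nat k)%Z))) (I n)) /\
    is_Zseries I (Cmult A B) /\
    is_series (fun k : nat => Cmult (sgnZ (Z.of_nat k)) (h1 (Z.of_nat k))) A /\
    is_series (fun n : nat =>
        Cmult (sgnZ (m + Z.of_nat n)%Z) (h2 (- m - Z.of_nat n)%Z)) B.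
Proof.
  set (a := fun i : nat => (sgnZ (Z.of_nat i) * h1 (Z.of_nat i))%C).
  set (b := fun j : nat => (sgnZ (m + Z.of_nat j) * h2 (- m - Z.of_nat j)%Z)%C).
  destruct (rapid_decay_inv_pronic_bound h1 0 H1) as [ca Hca].
  destruct (rapid_decay_inv_pronic_bound _ m (rapid_decay_opp h2 H2)) as [cb Hcb].
  assert (Ha : forall i, Cmod (a i) <= ca * inv_pronic i).
  { intros i. unfold a. rewrite Cmod_sgnZ_mul. apply Hca. }
  assert (Hb : forall j, Cmod (b j) <= cb * inv_pronic j).
  { intros j. unfold b. rewrite Cmod_sgnZ_mul.
    replace (- m - Z.of_nat j)%Z with (- (m + Z.of_nat j))%Z by lia. apply Hcb. }
  destruct (ex_series_inv_pronic_bound a ca Ha) as [A HA].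
  destruct (ex_series_inv_pronic_bound b cb Hb) as [B HB].
  destruct (is_Zseries_diag_sums a b ca cb A B Ha Hb HA HB) as [D [HD HDZ]].
  exists (fun n => D (n + m)%Z), A, B.
  split; [|split; [|split; [exact HA | exact HB]]].
  - intros n. eapply is_series_ext; [|exact (HD (n + m)%Z)].
    intros k. symmetry. apply summand_eq_diag_term.
  - exact (is_Zseries_shift D _ m HDZ).
Qed.
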